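(* Let $N\in\mathbb{N}_{\ge2}$ and $\phi,B_x,B_y>0$. For any data pairs $\{(x_i,y_i)\}_{i\in[N]}\subset[-B_x,B_x]\times[-B_y,B_y]$ with $|x_i-x_j|\ge\phi$ for all $i\ne j$, there exists a ReLU FNN function $f^{(mmr)}_{FF}:\mathbb{R}\to\mathbb{R}$ with width $N-1$, depth $2$ and weight bound $\max\{1,B_x,B_y,4B_y/\phi\}$ such that $f^{(mmr)}_{FF}(x_i)=y_i$ for all $i\in[N]$. Furthermore, $|f^{(mmr)}_{FF}(x)|\le\frac{8(N-1)B_xB_y}{\phi}+B_y$ for all $x\in[-B_x,B_x]$.
   Context: ReLU FNN of depth $L$, width $W$: $f_0=x$, $f_l=\sigma_R(W_lf_{l-1}+b_l)$ ($1\le l\le L-1$), $f=W_Lf_{L-1}+b_L$ with hidden layers of width $W$, $\sigma_R(x)=\max\{x,0\}$; the weight bound is the maximum absolute value of all weights and biases. *)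

From HB Require Import structures.
From mathcomp Require Import all_boot all_order all_algebra.
From mathcomp Require Import reals.
Set Implicit Arguments. Unset Strict Implicit. Unset Printing Implicit Defensive.
Import Order.TTheory GRing.Theory Num.Theory.
Local Open Scope ring_scope.

Definition reluR {R : realDomainType} (t : R) : R := Num.max t 0.
Definition relu_vec {R : realDomainType} {n} (v : 'cV[R]_n) : 'cV[R]_n :=
  map_mx reluR v.

(* A ReLU FNN with input dimension din, output dimension dout, depth L
   (L >= 2, i.e. L-1 hidden layers, each of width W):
   f_1 = relu(W_1 x + b_1), f_l = relu(W_l f_{l-1} + b_l) (2 <= l <= L-1),
   f   = W_L f_{L-1} + b_L.
   The L-2 "middle" layers l = 2..L-1 are indexed by 'I_(L-2). *)
Record relu_fnn (R : realDomainType) (din dout W L : nat) := ReluFnn {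
  W_in  : 'M[R]_(W, din);
  b_in  : 'cV[R]_W;
  W_mid : 'I_(L - 2) -> 'M[R]_(W, W);
  b_mid : 'I_(L - 2) -> 'cV[R]_W;
  W_out : 'M[R]_(dout, W);
  b_out : 'cV[R]_dout
}.

Definition fnn_eval {R : realDomainType} {din dout W L}
  (net : relu_fnn R din dout W L) (x : 'cV[R]_din) : 'cV[R]_dout :=
  let f1 := relu_vec (W_in net *m x + b_in net) in
  let fL1 := foldl (fun h (i : 'I_(L - 2)) =>
                      relu_vec (W_mid net i *m h + b_mid net i))
                   f1 (enum 'I_(L - 2)) in
  W_out net *m fL1 + b_out net.

Definition fnn_fun {R : realDomainType} {W L} (net : relu_fnn R 1 1 W L)
  (x : R) : R := fnn_eval net (x%:M) 0 0.

Definition weight_bounded {R : realDomainType} {din dout W L}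
  (net : relu_fnn R din dout W L) (M : R) : Prop :=
  (forall i j, `|W_in net i j| <= M) /\ (forall i j, `|b_in net i j| <= M) /\
  (forall k i j, `|W_mid net k i j| <= M) /\
  (forall k i j, `|b_mid net k i j| <= M) /\
  (forall i j, `|W_out net i j| <= M) /\ (forall i j, `|b_out net i j| <= M).

From HB Require Import structures.
From mathcomp Require Import all_boot all_order all_algebra.
From mathcomp Require Import reals.
From mathcomp Require Import ring lra zify.
Import Order.TTheory GRing.Theory Num.Theory.
Local Open Scope ring_scope.

(* Sort the points so that x_0 < x_1 < ... < x_n, n = N - 1, and let s_k be
   the slope of the k-th segment of the piecewise linear interpolant. That
   interpolant is y_0 + sum_(k < n) (s_k - s_(k-1)) relu(t - x_k): one hidden
   ReLU neuron per knot except the last. Separation bounds the slopes by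
   2 B_y / phi, hence the jumps by 4 B_y / phi, and every ReLU term is at most
   2 B_x on [-B_x, B_x]. *)

Lemma reluR_ge0 {R : realDomainType} (t : R) : 0 <= reluR t.
Proof. by rewrite /reluR le_max lexx orbT. Qed.

Lemma reluR_le_norm {R : realDomainType} (t : R) : reluR t <= `|t|.
Proof. by rewrite /reluR ge_max ler_norm normr_ge0. Qed.

Section PiecewiseLinear.
Context {R : realFieldType} (X Y : nat -> R) (n : nat).

Definition slope k := (Y k.+1 - Y k) / (X k.+1 - X k).

Definition slope_jump k := slope k - (if k is k'.+1 then slope k' else 0).

Definition relu_interp t := \sum_(k < n) slope_jump k * reluR (t - X k) + Y 0.

Lemma sum_slope_jump m : \sum_(k < m.+1) slope_jump k = slope m.
Proof.
elim: m => [|m IHm]; first by rewrite big_ord1 /slope_jump subr0.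
by rewrite big_ord_recr /= IHm /slope_jump addrC subrK.
Qed.

Section Knots.
Hypothesis X_inc : forall k, (k < n)%N -> X k < X k.+1.

Lemma X_le i j : (i <= j <= n)%N -> X i <= X j.
Proof.
case/andP=> le_ij le_jn; elim: j le_ij le_jn => [|j IHj].
  by rewrite leqn0 => /eqP ->.
rewrite leq_eqVlt => /orP[/eqP -> // | lt_ij] lt_jn.
by apply: le_trans (IHj lt_ij (ltnW lt_jn)) _; apply/ltW/X_inc.
Qed.

Lemma sum_slope_jump_mul m : (m <= n)%N ->
  \sum_(k < m) slope_jump k * (X m - X k) = Y m - Y 0.
Proof.
elim: m => [|m IHm] le_mn; first by rewrite big_ord0 subrr.
have split_gap (k : 'I_m.+1) : slope_jump k * (X m.+1 - X k) =
    slope_jump k * (X m.+1 - X m) + slope_jump k * (X m - X k).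
  by rewrite -mulrDr addrA subrK.
rewrite (eq_bigr _ (fun k _ => split_gap k)) big_split /= -big_distrl /=.
rewrite sum_slope_jump big_ord_recr /= subrr mulr0 addr0 IHm; last exact: ltnW.
have gap_neq0 : X m.+1 - X m != 0 by rewrite subr_eq0 gt_eqF ?X_inc.
by rewrite /slope divfK // addrA subrK.
Qed.

Lemma relu_interp_knot m : (m <= n)%N -> relu_interp (X m) = Y m.
Proof.
move=> le_mn; rewrite /relu_interp -[Y m](subrK (Y 0)) -sum_slope_jump_mul //.
rewrite (big_ord_widen _ (fun k => slope_jump k * (X m - X k)) le_mn).
rewrite [in RHS]big_mkcond /=; congr (_ + _); apply: eq_bigr => k _.
(* the neurons of the knots x_k with k >= m are still inactive at x_m *)
case: ltnP => [lt_km | le_mk]; rewrite /reluR.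
  by rewrite max_l // subr_ge0 X_le // ltnW.
by rewrite max_r ?mulr0 // subr_le0 X_le // le_mk ltnW.
Qed.

End Knots.

Section Bounds.
Variables phi By : R.
Hypothesis phi_gt0 : 0 < phi.
Hypothesis X_gap : forall k, (k < n)%N -> phi <= X k.+1 - X k.
Hypothesis Y_bound : forall k, (k <= n)%N -> `|Y k| <= By.

Fact By_ge0 : 0 <= By.
Proof. exact: le_trans (normr_ge0 _) (Y_bound 0 (leq0n n)). Qed.

Lemma norm_slope_le k : (k < n)%N -> `|slope k| <= 2 * By / phi.
Proof.
move=> lt_kn; have gap := X_gap k lt_kn.
have gap_gt0 : 0 < X k.+1 - X k by apply: lt_le_trans gap.
rewrite /slope normrM normfV (gtr0_norm gap_gt0) ler_pdivrMr //.
have dY : `|Y k.+1 - Y k| <= 2 * By.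
  apply: le_trans (ler_normB _ _) _.
  by have := Y_bound k (ltnW lt_kn); have := Y_bound k.+1 lt_kn; lra.
apply: le_trans dY _.
by rewrite mulrAC ler_pdivlMr // ler_wpM2l ?mulr_ge0 ?By_ge0.
Qed.

Lemma norm_slope_jump_le k : (k < n)%N -> `|slope_jump k| <= 4 * By / phi.
Proof.
move=> lt_kn; have -> : 4 * By / phi = 2 * By / phi + 2 * By / phi.
  by rewrite -mulrDl; congr (_ / _); lra.
apply: le_trans (ler_normB _ _) _; apply: lerD; first exact: norm_slope_le.
case: k lt_kn => [|k] lt_kn; last by apply: norm_slope_le; apply: ltnW.
by rewrite normr0 divr_ge0 ?mulr_ge0 ?By_ge0 ?ltW.
Qed.

Lemma norm_relu_interp_le (Bx t : R) : `|t| <= Bx ->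
    (forall k, (k < n)%N -> `|X k| <= Bx) ->
  `|relu_interp t| <= 8 * n%:R * Bx * By / phi + By.
Proof.
move=> t_le X_le_Bx; apply: le_trans (ler_normD _ _) _.
apply: lerD; last exact: Y_bound.
apply: le_trans (ler_norm_sum _ _ _) _.
have term_le (k : 'I_n) :
    `|slope_jump k * reluR (t - X k)| <= 4 * By / phi * (2 * Bx).
  rewrite normrM (ger0_norm (reluR_ge0 _)).
  apply: ler_pM; rewrite ?normr_ge0 ?reluR_ge0 ?norm_slope_jump_le //.
  apply: le_trans (reluR_le_norm _) _; apply: le_trans (ler_normB _ _) _.
  by have := X_le_Bx k (ltn_ord k); lra.
have -> : 8 * n%:R * Bx * By / phi = n%:R * (4 * By / phi * (2 * Bx)) by ring.
apply: le_trans (ler_sum _ (fun k _ => term_le k)) _.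
by rewrite sumr_const card_ord (mulr_natl _ n).
Qed.

End Bounds.
End PiecewiseLinear.

Lemma fnn_fun_depth2 (R : realDomainType) W (net : relu_fnn R 1 1 W 2) t :
  fnn_fun net t = \sum_(k < W) W_out net 0 k *
    reluR (W_in net k 0 * t + b_in net k 0) + b_out net 0 0.
Proof.
rewrite /fnn_fun /fnn_eval.
have -> : enum 'I_(2 - 2) = [::] by apply: size0nil; rewrite size_enum_ord.
rewrite /= !mxE; congr (_ + _); apply: eq_bigr => k _.
by rewrite /relu_vec !mxE big_ord1 !mxE eqxx mulr1n.
Qed.

Section ReluInterpNet.
Context {R : realFieldType} (X Y : nat -> R) (n : nat).

Definition relu_interp_net : relu_fnn R 1 1 n 2 :=
  ReluFnn (\matrix_(i, j) 1) (\col_k (- X k)) (fun _ => 0) (fun _ => 0)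
    (\row_k slope_jump X Y k) (Y 0)%:M.

Lemma fnn_fun_relu_interp_net t : fnn_fun relu_interp_net t = relu_interp X Y n t.
Proof.
rewrite fnn_fun_depth2 /= [(Y 0)%:M 0 0]mxE eqxx mulr1n; congr (_ + _).
by apply: eq_bigr => k _; rewrite !mxE mul1r.
Qed.

Lemma relu_interp_net_weight_bounded M : 1 <= M ->
    (forall k, (k < n)%N -> `|X k| <= M) ->
    (forall k, (k < n)%N -> `|slope_jump X Y k| <= M) -> `|Y 0| <= M ->
  weight_bounded relu_interp_net M.
Proof.
move=> one_le X_norm_le jump_le Y0_le.
split; [|split; [|split; [|split; [|split]]]] => /=.
- by move=> i j; rewrite mxE normr1.
- by move=> i j; rewrite mxE normrN X_norm_le.
- by case=> k; rewrite subnn.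
- by case=> k; rewrite subnn.
- by move=> i j; rewrite mxE jump_le.
- by move=> i j; rewrite !ord1 mxE eqxx mulr1n.
Qed.

End ReluInterpNet.

Lemma separated_sorted_enum {R : realDomainType} {N} {x : 'I_N -> R} {phi : R}
    (i0 : 'I_N) :
    (forall i j, i != j -> phi <= `|x i - x j|) ->
  exists p : nat -> 'I_N,
    (forall k, (k.+1 < N)%N -> phi <= x (p k.+1) - x (p k)) /\
    (forall i, exists2 m, (m < N)%N & p m = i).
Proof.
move=> x_sep; pose s := sort [rel i j | x i <= x j] (enum 'I_N).
have size_s : size s = N by rewrite size_sort size_enum_ord.
have sorted_s : sorted [rel i j | x i <= x j] s.
  by apply: sort_sorted => i j; apply: le_total.
exists (nth i0 s); split.
  move=> k lt_k1N; have lt_kN := ltnW lt_k1N.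
  have le_k : x (nth i0 s k) <= x (nth i0 s k.+1).
    have le_trans_x : transitive [rel i j : 'I_N | x i <= x j].
      by move=> a b c /=; apply: le_trans.
    apply: (sorted_leq_nth le_trans_x _ i0 sorted_s); rewrite ?inE ?size_s //.
    by move=> a /=.
  have neq_k : nth i0 s k.+1 != nth i0 s k.
    by rewrite nth_uniq ?size_s ?sort_uniq ?enum_uniq // eqn_leq ltnn.
  by have := x_sep _ _ neq_k; rewrite ger0_norm ?subr_ge0.
move=> i; have s_i : i \in s by rewrite mem_sort mem_enum.
have := index_mem i s; rewrite s_i size_s => lt_iN.
by exists (index i s); rewrite ?nth_index.
Qed.

Theorem lemma15 (R : realType) (N : nat) (phi Bx By : R)
  (x y : 'I_N -> R) :
  (2 <= N)%N -> 0 < phi -> 0 < Bx -> 0 < By ->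
  (forall i, -Bx <= x i <= Bx) -> (forall i, -By <= y i <= By) ->
  (forall i j, i != j -> phi <= `|x i - x j|) ->
  exists net : relu_fnn R 1 1 (N - 1) 2,
    weight_bounded net (Num.max (Num.max 1 Bx) (Num.max By (4 * By / phi))) /\
    (forall i, fnn_fun net (x i) = y i) /\
    (forall t : R, -Bx <= t <= Bx ->
       `|fnn_fun net t| <= 8 * (N - 1)%:R * Bx * By / phi + By).
Proof.
move=> le2N phi_gt0 _ _ x_bound y_bound x_sep.
have [p [p_gap p_onto]] := separated_sorted_enum (Ordinal (ltnW le2N)) x_sep.
pose X k := x (p k); pose Y k := y (p k).
have X_gap k : (k < N - 1)%N -> phi <= X k.+1 - X k.
  by move=> lt_k; apply: p_gap; lia.
have X_inc k : (k < N - 1)%N -> X k < X k.+1.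
  by move=> /X_gap; lra.
have X_bound k : `|X k| <= Bx by rewrite ler_norml; apply: x_bound.
have Y_bound k : (k <= N - 1)%N -> `|Y k| <= By.
  by move=> _; rewrite ler_norml; apply: y_bound.
exists (relu_interp_net X Y (N - 1)); split; [|split].
- have M_ge a : [|| a == 1, a == Bx, a == By | a == 4 * By / phi] ->
      a <= Num.max (Num.max 1 Bx) (Num.max By (4 * By / phi)).
    by case/or4P=> /eqP ->; rewrite !le_max lexx ?orbT.
  apply: relu_interp_net_weight_bounded; first by rewrite M_ge ?eqxx.
  + by move=> k _; apply: le_trans (X_bound k) (M_ge Bx _); rewrite eqxx orbT.
  + move=> k lt_k; apply: le_trans (M_ge (4 * By / phi) _); last first.
      by rewrite eqxx !orbT.
    exact: (norm_slope_jump_le X Y (N - 1) phi By phi_gt0 X_gap Y_bound k lt_k).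
  + by apply: le_trans (Y_bound 0 _) (M_ge By _); rewrite ?eqxx ?orbT.
- move=> i; have [m lt_mN <-] := p_onto i.
  by rewrite fnn_fun_relu_interp_net relu_interp_knot //; lia.
- move=> t; rewrite -ler_norml fnn_fun_relu_interp_net => t_le.
  exact: norm_relu_interp_le.
Qed.
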